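(* For any two probability distributions $\pi_V,\pi'_V$ on $\mathbb V$ and any $1\le q\le\mathsf n$, \[\big|\log\mathbb P_{\pi_V}(X_q\mid X_{q+1:\mathsf n})-\log\mathbb P_{\pi'_V}(X_q\mid X_{q+1:\mathsf n})\big|\le2\sum_{\ell=0}^{\mathsf n+1-q}(\nu_q\nu_{q+\ell-1}\nu_{q+\ell})^{-1}\Big(\prod_{k=q+1}^{q+\ell-1}(1-\nu_k)\Big)\|\pi_V-\pi'_V\|_{\mathsf{tv}},\] for every realization of the observations (empty products equal $1$).
   Context: Let $\mathsf n\ge1$, $\mathbb V$ a measurable space, $\mathbb X$ a discrete set, and $K_i:\mathbb X\times\mathbb V^2\to[0,\infty)$ for $i\in\mathbb Z$, each $K_i(\cdot,v,w)$ a probability on $\mathbb X$. For a probability $\pi_V$ on $\mathbb V$, $\mathbb P_{\pi_V}$ is the law of $(V_{1:\mathsf n+1},X_{1:\mathsf n})$ with $V_i$ i.i.d. $\pi_V$ and, given $V$, $X_i$ independent with $\mathbb P(X_i=x\mid V)=K_i(x,V_i,V_{i+1})$; $\mathbb P_{\pi_V}(X_q\mid X_{q+1:\mathsf n})$ is the conditional probability of the observed value of $X_q$ given the observed $X_{q+1:\mathsf n}$. Assumption H2: there exist $\nu_i>0$ ($i\in\mathbb Z$) with $\nu_i\le K_i(x,v,w)\le1$ for all $x,i,v,w$. $\|\xi\|_{\mathsf{tv}}=\sup\{\int f\,d\xi:\|f\|_\infty=1\}$. *)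

From HB Require Import structures.
From mathcomp Require Import all_boot all_order all_algebra.
From mathcomp Require Import all_classical all_reals all_analysis.
Set Implicit Arguments. Unset Strict Implicit. Unset Printing Implicit Defensive.
Import Order.TTheory GRing.Theory Num.Theory.
Local Open Scope classical_set_scope.
Local Open Scope ring_scope.

(* Conventions: indices are natural numbers; V_i lives at coordinate i of a
   sequence v : nat -> V, X_i is x i for x : nat -> X (i = 1..n). *)

Definition upd (V : Type) (v : nat -> V) (k : nat) (w : V) : nat -> V :=
  fun i => if i == k then w else v i.

Fixpoint iint d (V : measurableType d) (R : realType) (pi : probability V R)
    (k : nat) (F : (nat -> V) -> \bar R) (v : nat -> V) : \bar R :=
  match k with
  | 0 => F v
  | k'.+1 => (\int[pi]_w iint pi k' F (upd v k w))%E
  end.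

(* P_pi(X_{1:n} = x_{1:n}) = E[ prod_{i=1}^n K_i(x_i, V_i, V_{i+1}) ],
   V_1..V_{n+1} i.i.d. pi *)
Definition jointP d (V : measurableType d) (R : realType) (X : finType)
    (pi : probability V R) (n : nat) (K : nat -> X -> V -> V -> R)
    (x : nat -> X) : \bar R :=
  iint pi n.+1
    (fun v => (\prod_(1 <= i < n.+1) K i (x i) (v i) (v i.+1))%:E)
    (fun _ => point).

Definition ext (X : Type) (n : nat) (obs : nat -> X) (y : {ffun 'I_n -> X})
    (i : nat) : X :=
  if i is j.+1 then
    (if (insub j : option 'I_n) is Some k then y k else obs i)
  else obs i.

(* P_pi(X_{a:n} = obs_{a:n}) : marginal, summing over X_1..X_{a-1} *)
Definition margP d (V : measurableType d) (R : realType) (X : finType)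
    (pi : probability V R) (n : nat) (K : nat -> X -> V -> V -> R)
    (obs : nat -> X) (a : nat) : \bar R :=
  (\sum_(y : {ffun 'I_n -> X} |
          [forall k : 'I_n, (a <= k.+1)%N ==> (y k == obs k.+1)])
     jointP pi n K (ext obs y))%E.

Definition condP d (V : measurableType d) (R : realType) (X : finType)
    (pi : probability V R) (n : nat) (K : nat -> X -> V -> V -> R)
    (obs : nat -> X) (q : nat) : R :=
  fine (margP pi n K obs q) / fine (margP pi n K obs q.+1).

Definition tvnorm d (V : measurableType d) (R : realType)
    (pi pi' : probability V R) : \bar R :=
  ereal_sup [set (\int[pi]_x (f x)%:E - \int[pi']_x (f x)%:E)%E
            | f in [set f : V -> R | measurable_fun setT f /\
                     (forall x, `|f x| <= 1) /\
                     sup (range (fun x => `|f x|)) = 1]].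

From HB Require Import structures.
From mathcomp Require Import all_boot all_order all_algebra.
From mathcomp Require Import all_classical all_reals all_analysis.
From mathcomp Require Import measurable_realfun ring lra.
Import Order.TTheory GRing.Theory Num.Theory.
Local Open Scope classical_set_scope.
Local Open Scope ring_scope.

(* P_pi(X_{a:n} = obs_{a:n}) is the pi-integral of a forward function F_a built from
   the kernels K_i(obs_i, ., .), i >= a, so the conditional probability is the ratio of
   the integrals of F_q and F_{q+1}.  Replace the laws of V_{n+1}, V_n, ..., V_q by pi'
   one at a time, the future being carried by the backward functions of pi' (the
   hybrid ratios below): the log of the ratio telescopes.  Changing the law of V_{k+1}
   moves it by at most (M - m) / (m nu_k nu_{k+1}) ||pi - pi'||_tv if F_q / F_{q+1} lies
   in [m, M] at time k, the other factors being controlled by the Harnack bounds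
   nu_j S <= F <= S; by Doeblin's contraction m >= nu_q and M - m <= prod_{q<i<=k}
   (1 - nu_i).  Changing the law of V_q itself costs ||pi - pi'||_tv / nu_q. *)

Section RealFacts.
Context {R : realType}.

Lemma ln_lipschitz {e a b : R} : 0 < e -> e <= a -> e <= b ->
  `|ln a - ln b| <= `|a - b| / e.
Proof.
move=> e0.
suff ln_sub x y : e <= x -> e <= y -> ln x - ln y <= `|x - y| / e.
  by move=> ea eb; rewrite ler_norml ln_sub // andbT lerNl opprB distrC ln_sub.
move=> ex ey; have x0 := lt_le_trans e0 ex; have y0 := lt_le_trans e0 ey.
rewrite -ln_div ?posrE // -[x / y](subrK 1) addrC.
apply: le_trans (le_ln1Dx _) _; first by have := divr_gt0 x0 y0; lra.
rewrite -[1](@divff _ y) ?gt_eqF // -mulrBl.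
apply: le_trans (ler_wpM2r _ (ler_norm _)) _; first by rewrite invr_ge0 ltW.
by rewrite ler_wpM2l // lef_pV2 ?posrE.
Qed.

Lemma dist_telescope (a b : nat -> R) (c : R) (N : nat) :
  (forall l, (l < N)%N -> a l = b l.+1) ->
  `|a N - c| <= \sum_(0 <= l < N.+1) `|a l - b l| + `|b 0%N - c|.
Proof.
elim: N => [|N IH] ab; first by rewrite big_nat1 ler_distD.
rewrite big_nat_recr //= addrAC addrC.
apply: le_trans (ler_distD (b N.+1) _ _) _; rewrite lerD2l -ab //.
by apply: IH => l lN; apply: ab; rewrite ltnS ltnW.
Qed.

End RealFacts.

Section BoundedIntegrals.
Context {d : measure_display} {T : measurableType d} {R : realType}.

Definition bounded_measurable (f : T -> R) :=
  measurable_fun setT f /\ exists M, forall x, `|f x| <= M.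

Definition unit_measurable (f : T -> R) :=
  measurable_fun setT f /\ forall x, 0 <= f x <= 1.

Lemma unit_measurable_bounded {f} : unit_measurable f -> bounded_measurable f.
Proof.
move=> [mf f01]; split=> //; exists 1 => x.
by have /andP[f0 f1] := f01 x; rewrite ger0_norm.
Qed.

Lemma unit_measurable_ge0 {f} : unit_measurable f -> forall x, 0 <= f x.
Proof. by move=> [_ f01] x; case/andP: (f01 x). Qed.

Lemma unit_measurable_le1 {f} : unit_measurable f -> forall x, f x <= 1.
Proof. by move=> [_ f01] x; case/andP: (f01 x). Qed.

Lemma unit_measurable_cst1 : unit_measurable (fun _ => 1).
Proof. by split=> [|_]; [exact: measurable_cst | rewrite ler01 lexx]. Qed.

Lemma unit_measurableM {f g} :
  unit_measurable f -> unit_measurable g -> unit_measurable (fun x => f x * g x).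
Proof.
move=> [mf f01] [mg g01]; split; first exact: measurable_funM.
move=> x; have /andP[f0 f1] := f01 x; have /andP[g0 g1] := g01 x.
by rewrite mulr_ge0 //= mulr_ile1.
Qed.

Lemma bounded_measurable_cst c : bounded_measurable (fun _ => c).
Proof. by split; [exact: measurable_cst | exists `|c|]. Qed.

Lemma bounded_measurableD {f g} : bounded_measurable f -> bounded_measurable g ->
  bounded_measurable (fun x => f x + g x).
Proof.
move=> [mf [M hM]] [mg [N hN]]; split; first exact: measurable_funD.
by exists (M + N) => x; apply: le_trans (ler_normD _ _) (lerD (hM x) (hN x)).
Qed.

Lemma bounded_measurableN {f} : bounded_measurable f ->
  bounded_measurable (fun x => - f x).
Proof.
by move=> [mf [M hM]]; split; [exact: measurableT_comp | exists M => x; rewrite normrN].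
Qed.

Lemma bounded_measurableB {f g} : bounded_measurable f -> bounded_measurable g ->
  bounded_measurable (fun x => f x - g x).
Proof. by move=> bf bg; apply/bounded_measurableD/bounded_measurableN. Qed.

Lemma bounded_measurable_normr {f} : bounded_measurable f ->
  bounded_measurable (fun x => `|f x|).
Proof.
by move=> [mf [M hM]]; split; [exact: measurableT_comp | exists M => x; rewrite normr_id].
Qed.

Lemma bounded_measurableM {f g} : bounded_measurable f -> bounded_measurable g ->
  bounded_measurable (fun x => f x * g x).
Proof.
move=> [mf [M hM]] [mg [N hN]]; split; first exact: measurable_funM.
by exists (M * N) => x; rewrite normrM; apply: ler_pM.
Qed.

Lemma bounded_measurableZ c {f} : bounded_measurable f ->
  bounded_measurable (fun x => c * f x).
Proof. exact: bounded_measurableM (bounded_measurable_cst c). Qed.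

Lemma bounded_measurable_sum (I : Type) (s : seq I) (p : pred I) (F : I -> T -> R) :
  (forall i, p i -> bounded_measurable (F i)) ->
  bounded_measurable (fun x => \sum_(i <- s | p i) F i x).
Proof.
move=> bF; elim: s => [|j s IH].
  rewrite (_ : (fun _ => _) = fun=> 0); first exact: bounded_measurable_cst.
  by apply/funext => x; rewrite big_nil.
rewrite (_ : (fun _ => _) = fun x =>
    (if p j then F j x else 0) + \sum_(i <- s | p i) F i x).
  by case pj: (p j); apply: bounded_measurableD => //;
    [exact: bF | exact: bounded_measurable_cst].
by apply/funext => x; rewrite big_cons; case: (p j); rewrite ?add0r.
Qed.

Variable P : probability T R.

Lemma bounded_measurable_integrable f :
  bounded_measurable f -> P.-integrable setT (EFin \o f).
Proof.
move=> [mf [M hM]]; apply: measurable_bounded_integrable => //.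
  by rewrite /= probability_setT ltry.
exists M; split; first exact: num_real.
by move=> y My x _; apply: le_trans (hM x) (ltW My).
Qed.

Lemma integral_bounded_EFin f : bounded_measurable f ->
  (\int[P]_x (f x)%:E)%E = (\int[P]_x f x)%:E.
Proof.
move=> bf; rewrite /Rintegral fineK // integrable_fin_num //.
exact: bounded_measurable_integrable.
Qed.

Lemma Rintegral_prob_cst c : \int[P]_x c = c.
Proof. by rewrite Rintegral_cst //= probability_setT mulr1. Qed.

Lemma le_Rintegral_bounded f g :
  bounded_measurable f -> bounded_measurable g -> (forall x, f x <= g x) ->
  \int[P]_x f x <= \int[P]_x g x.
Proof. by move=> bf bg fg; rewrite le_Rintegral // ?bounded_measurable_integrable. Qed.

Lemma Rintegral_ge_cst c f : bounded_measurable f -> (forall x, c <= f x) ->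
  c <= \int[P]_x f x.
Proof.
move=> bf cf; rewrite -[leLHS](Rintegral_prob_cst c).
by apply: le_Rintegral_bounded => //; exact: bounded_measurable_cst.
Qed.

Lemma Rintegral_le_cst c f : bounded_measurable f -> (forall x, f x <= c) ->
  \int[P]_x f x <= c.
Proof.
move=> bf cf; rewrite -[leRHS](Rintegral_prob_cst c).
by apply: le_Rintegral_bounded => //; exact: bounded_measurable_cst.
Qed.

Lemma RintegralB_bounded f g : bounded_measurable f -> bounded_measurable g ->
  \int[P]_x (f x - g x) = \int[P]_x f x - \int[P]_x g x.
Proof. by move=> bf bg; rewrite RintegralB // bounded_measurable_integrable. Qed.

Lemma RintegralZl_bounded c f : bounded_measurable f ->
  \int[P]_x (c * f x) = c * \int[P]_x f x.
Proof. by move=> bf; rewrite RintegralZl // bounded_measurable_integrable. Qed.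

Lemma RintegralZr_bounded c f : bounded_measurable f ->
  \int[P]_x (f x * c) = \int[P]_x f x * c.
Proof. by move=> bf; rewrite RintegralZr // bounded_measurable_integrable. Qed.

Lemma Rintegral_sum_bounded (I : Type) (s : seq I) (p : pred I) (F : I -> T -> R) :
  (forall i, p i -> bounded_measurable (F i)) ->
  \int[P]_x (\sum_(i <- s | p i) F i x) = \sum_(i <- s | p i) \int[P]_x F i x.
Proof.
move=> bF; elim: s => [|i s IH].
  by under eq_Rintegral do rewrite big_nil; rewrite big_nil Rintegral_prob_cst.
under eq_Rintegral do rewrite big_cons.
rewrite big_cons; case: ifP => // pi.
rewrite RintegralD ?IH // bounded_measurable_integrable //; first exact: bF.
exact: bounded_measurable_sum.
Qed.

End BoundedIntegrals.

Section ParametricIntegrals.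
Context {d1 d2 : measure_display} {T1 : measurableType d1} {T2 : measurableType d2}.
Context {R : realType} (P1 : probability T1 R) (P2 : probability T2 R).
Variable h : T1 * T2 -> R.
Hypothesis hh : unit_measurable h.

Let mh : measurable_fun setT (EFin \o h).
Proof. by case: hh => mh _; exact/measurable_EFinP. Qed.

Let h0 z : (0 <= (EFin \o h) z)%E.
Proof. by rewrite lee_fin (unit_measurable_ge0 hh). Qed.

Lemma unit_measurable_pair1 w : unit_measurable (fun u => h (u, w)).
Proof. by case: hh => mh' h01; split=> [|u]; [exact: measurable_fun_pair1 | exact: h01]. Qed.

Lemma unit_measurable_pair2 u : unit_measurable (fun w => h (u, w)).
Proof. by case: hh => mh' h01; split=> [|w]; [exact: measurable_fun_pair2 | exact: h01]. Qed.

Lemma unit_measurable_Rintegral1 : unit_measurable (fun w => \int[P1]_u h (u, w)).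
Proof.
split.
  apply/measurable_EFinP; rewrite (_ : _ \o _ = fubini_G P1 (EFin \o h)).
    exact: measurable_fun_fubini_tonelli_G.
  apply/funext => w; rewrite /= -integral_bounded_EFin //.
  exact/unit_measurable_bounded/unit_measurable_pair1.
move=> w; have bh := unit_measurable_bounded (unit_measurable_pair1 w).
rewrite Rintegral_ge_cst ?Rintegral_le_cst // => u.
  exact: (unit_measurable_le1 (unit_measurable_pair1 w)).
exact: (unit_measurable_ge0 (unit_measurable_pair1 w)).
Qed.

Lemma unit_measurable_Rintegral2 : unit_measurable (fun u => \int[P2]_w h (u, w)).
Proof.
split.
  apply/measurable_EFinP; rewrite (_ : _ \o _ = fubini_F P2 (EFin \o h)).
    exact: measurable_fun_fubini_tonelli_F.
  apply/funext => u; rewrite /= -integral_bounded_EFin //.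
  exact/unit_measurable_bounded/unit_measurable_pair2.
move=> u; have bh := unit_measurable_bounded (unit_measurable_pair2 u).
rewrite Rintegral_ge_cst ?Rintegral_le_cst // => w.
  exact: (unit_measurable_le1 (unit_measurable_pair2 u)).
exact: (unit_measurable_ge0 (unit_measurable_pair2 u)).
Qed.

Lemma Rintegral_swap :
  \int[P1]_u \int[P2]_w h (u, w) = \int[P2]_w \int[P1]_u h (u, w).
Proof.
apply: EFin_inj; rewrite -!integral_bounded_EFin;
  try exact/unit_measurable_bounded/unit_measurable_Rintegral1;
  try exact/unit_measurable_bounded/unit_measurable_Rintegral2.
transitivity (\int[P1]_u \int[P2]_w (EFin \o h) (u, w))%E.
  apply: eq_integral => u _; rewrite -integral_bounded_EFin //.
  exact/unit_measurable_bounded/unit_measurable_pair2.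
rewrite fubini_tonelli //; apply: eq_integral => w _.
by rewrite -integral_bounded_EFin //; exact/unit_measurable_bounded/unit_measurable_pair1.
Qed.

End ParametricIntegrals.

Section ProductProjections.
Context {d1 d2 : measure_display} {T1 : measurableType d1} {T2 : measurableType d2}.
Context {R : realType}.

Lemma unit_measurable_fst (f : T1 -> R) :
  unit_measurable f -> unit_measurable (fun p : T1 * T2 => f p.1).
Proof. by case=> mf f01; split=> [|p]; [exact: measurableT_comp | exact: f01]. Qed.

Lemma unit_measurable_snd (f : T2 -> R) :
  unit_measurable f -> unit_measurable (fun p : T1 * T2 => f p.2).
Proof. by case=> mf f01; split=> [|p]; [exact: measurableT_comp | exact: f01]. Qed.

End ProductProjections.

Section TotalVariation.
Context {d : measure_display} {V : measurableType d} {R : realType}.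

Definition tv_admissible (f : V -> R) :=
  measurable_fun setT f /\ (forall x, `|f x| <= 1) /\ sup (range (fun x => `|f x|)) = 1.

Lemma tv_admissible_cst1 : tv_admissible (fun _ => 1).
Proof.
split; first exact: measurable_cst.
split=> [_|]; first by rewrite normr1.
rewrite (_ : range _ = [set 1]) ?sup1 //.
by apply/seteqP; split=> [_ [x _ <-]|_ ->]; [rewrite normr1 | exists point; rewrite ?normr1].
Qed.

Lemma tv_admissible_scale {f : V -> R} {C : R} : measurable_fun setT f ->
  (forall x, `|f x| <= C) ->
  exists2 s, 0 <= s <= C & exists2 g, tv_admissible g & forall x, f x = s * g x.
Proof.
move=> mf fC; set s := sup (range (fun x => `|f x|)).
have ubf : has_ubound (range (fun x => `|f x|)) by exists C => _ [x _ <-].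
have fs x : `|f x| <= s by apply: ub_le_sup => //; exists x.
have sC : s <= C by apply: ge_sup => [|_ [x _ <-]]; [exists `|f point|, point | exact: fC].
have [s0|s_neq0] := eqVneq s 0.
  exists 0; first by rewrite lexx -s0.
  exists (fun _ => 1) => [|x]; first exact: tv_admissible_cst1.
  by rewrite mul0r; apply/normr0_eq0/le_anti; rewrite normr_ge0 -s0 fs.
have s_gt0 : 0 < s by rewrite lt_neqAle eq_sym s_neq0 (le_trans _ (fs point)).
exists s; first by rewrite sC ltW.
have gs x : `|f x / s| * s = `|f x|.
  by rewrite normrM (gtr0_norm (_ : 0 < s^-1)) ?invr_gt0 // mulfVK ?gt_eqF.
have g1 x : `|f x / s| <= 1 by rewrite -(ler_pM2r s_gt0) gs mul1r.
exists (fun x => f x / s) => [|x]; last by rewrite mulrC mulfVK ?gt_eqF.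
split; first exact: measurable_funM.
split=> //; have ubg : has_ubound (range (fun x => `|f x / s|)) by exists 1 => _ [x _ <-].
apply/le_anti; rewrite ge_sup //=; [|by exists `|f point / s|, point|by move=> _ [x _ <-]].
rewrite -(ler_pM2r s_gt0) mul1r; apply: ge_sup => [|_ [x _ <-]].
  by exists `|f point|, point.
by rewrite -gs ler_pM2r //; apply: ub_le_sup => //; exists x.
Qed.

Variables P P' : probability V R.

Lemma Rintegral_diff_le_tvnorm {f : V -> R} : tv_admissible f ->
  ((\int[P]_x f x - \int[P']_x f x)%:E <= tvnorm P P')%E.
Proof.
move=> [mf [f1 supf]]; have bf : bounded_measurable f by split=> //; exists 1.
rewrite EFinB -!integral_bounded_EFin //.
by apply: ereal_sup_ubound; exists f.
Qed.

Lemma tvnorm_ge0 : (0 <= tvnorm P P')%E.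
Proof.
have := Rintegral_diff_le_tvnorm tv_admissible_cst1.
by rewrite !Rintegral_prob_cst subrr.
Qed.

Section Finite.
Variable t : R.
Hypothesis tvE : tvnorm P P' = t%:E.

Let Rintegral_diff_le (f : V -> R) (C : R) : measurable_fun setT f ->
  (forall x, `|f x| <= C) -> \int[P]_x f x - \int[P']_x f x <= C * t.
Proof.
move=> mf fC; have [s /andP[s0 sC] [g hg fg]] := tv_admissible_scale mf fC.
have bg : bounded_measurable g by case: hg => mg [g1 _]; split=> //; exists 1.
under eq_Rintegral do rewrite fg; under [X in _ - X]eq_Rintegral do rewrite fg.
rewrite !RintegralZl_bounded // -mulrBr.
have := Rintegral_diff_le_tvnorm hg; rewrite tvE lee_fin => gt.
apply: le_trans (ler_wpM2l s0 gt) (ler_wpM2r _ sC).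
by rewrite -lee_fin -tvE tvnorm_ge0.
Qed.

Lemma Rintegral_dist_le_tvnorm (f : V -> R) (C : R) : measurable_fun setT f ->
  (forall x, `|f x| <= C) -> `|\int[P]_x f x - \int[P']_x f x| <= C * t.
Proof.
move=> mf fC; rewrite ler_norml Rintegral_diff_le // andbT lerNl opprB.
have bf : bounded_measurable f by split=> //; exists C.
have [mNf _] := bounded_measurableN bf.
have := @Rintegral_diff_le (fun x => - f x) C mNf (fun x => ltac:(by rewrite normrN)).
under eq_Rintegral do rewrite -mulN1r; under [X in _ - X]eq_Rintegral do rewrite -mulN1r.
by rewrite !RintegralZl_bounded // !mulN1r opprK addrC.
Qed.

End Finite.
End TotalVariation.
Arguments Rintegral_dist_le_tvnorm {d V R P P' t} tvE {f C}.

Section LogRatios.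
Context {d : measure_display} {V : measurableType d} {R : realType}.

Lemma ln_ratio_perturb (Q : probability V R) (G phi1 phi2 : V -> R) (nu delta : R) :
  bounded_measurable G -> bounded_measurable phi1 -> bounded_measurable phi2 ->
  (forall v, 0 <= G v) -> 0 < \int[Q]_v G v -> 0 < nu ->
  (forall v, nu <= phi1 v) -> (forall v, nu <= phi2 v) ->
  (forall v, `|phi1 v - phi2 v| <= delta) ->
  `|ln (\int[Q]_v (phi1 v * G v) / \int[Q]_v G v) -
    ln (\int[Q]_v (phi2 v * G v) / \int[Q]_v G v)| <= delta / nu.
Proof.
move=> bG b1 b2 G0 IG0 nu0 nu1 nu2 d12.
have ratio_ge (phi : V -> R) : bounded_measurable phi -> (forall v, nu <= phi v) ->
    nu <= \int[Q]_v (phi v * G v) / \int[Q]_v G v.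
  move=> bphi nuphi; rewrite ler_pdivlMr // -RintegralZl_bounded //.
  apply: le_Rintegral_bounded; [exact: bounded_measurableZ | exact: bounded_measurableM |].
  by move=> v; rewrite ler_wpM2r.
apply: le_trans (ln_lipschitz nu0 (ratio_ge _ b1 nu1) (ratio_ge _ b2 nu2)) _.
apply: ler_wpM2r; first by rewrite invr_ge0 ltW.
rewrite -mulrBl -RintegralB_bounded; try exact: bounded_measurableM.
rewrite normrM (gtr0_norm (_ : 0 < (\int[Q]_v G v)^-1)) ?invr_gt0 //.
rewrite ler_pdivrMr // -RintegralZl_bounded //.
have bdG : bounded_measurable (fun v => phi1 v * G v - phi2 v * G v).
  by apply: bounded_measurableB; exact: bounded_measurableM.
apply: le_trans (le_normr_Rintegral _ _) _ => //; first exact: bounded_measurable_integrable.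
apply: le_Rintegral_bounded => [||v].
- exact: bounded_measurable_normr.
- exact: bounded_measurableZ.
by rewrite -mulrBl normrM (ger0_norm (G0 v)) ler_wpM2r.
Qed.

Section FiniteTV.
Variables (P P' : probability V R) (t : R).
Hypothesis tvE : tvnorm P P' = t%:E.

Lemma ln_ratio_tvnorm {F G : V -> R} {m M r B : R} :
  bounded_measurable F -> bounded_measurable G -> 0 < m -> 0 < r -> 0 < B ->
  (forall v, m * G v <= F v <= M * G v) -> (forall v, r * B <= G v <= B) ->
  `|ln (\int[P]_v F v / \int[P]_v G v) - ln (\int[P']_v F v / \int[P']_v G v)|
    <= (M - m) / (m * r) * t.
Proof.
move=> bF bG m0 r0 B0 FG hG.
have IG (Q : probability V R) : r * B <= \int[Q]_v G v.
  by apply: Rintegral_ge_cst bG _ => v; case/andP: (hG v).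
have IG0 (Q : probability V R) : 0 < \int[Q]_v G v := lt_le_trans (mulr_gt0 r0 B0) (IG Q).
have ratio (Q : probability V R) : m <= \int[Q]_v F v / \int[Q]_v G v <= M.
  rewrite ler_pdivlMr // ler_pdivrMr // -!RintegralZl_bounded //.
  by apply/andP; split; apply: le_Rintegral_bounded => //;
    try exact: bounded_measurableZ; move=> v; case/andP: (FG v).
set c := \int[P']_v F v / \int[P']_v G v.
have /andP[mc cM] : m <= c <= M := ratio P'.
pose phi v := F v - c * G v.
have bphi : bounded_measurable phi by exact: bounded_measurableB bF (bounded_measurableZ c bG).
have phiE (Q : probability V R) : \int[Q]_v phi v = \int[Q]_v F v - c * \int[Q]_v G v.
  by rewrite RintegralB_bounded ?RintegralZl_bounded //; exact: bounded_measurableZ.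
have phiB v : `|phi v| <= (M - m) * B.
  have /andP[rBG GB] := hG v; have /andP[mF FM] := FG v.
  have G0 : 0 <= G v by apply: le_trans rBG; rewrite mulr_ge0 ?ltW.
  have MmG : (M - m) * G v <= (M - m) * B.
    by rewrite ler_wpM2l // subr_ge0 (le_trans mc cM).
  have cmG : 0 <= (c - m) * G v by rewrite mulr_ge0 // subr_ge0.
  have McG : 0 <= (M - c) * G v by rewrite mulr_ge0 // subr_ge0.
  rewrite ler_norml /phi; apply/andP; split; nra.
have := Rintegral_dist_le_tvnorm tvE (proj1 bphi) phiB.
rewrite !phiE {2}/c mulfVK ?gt_eqF // subrr subr0 => dist.
apply: le_trans (ln_lipschitz m0 (proj1 (andP (ratio P))) mc) _.
rewrite -/c (_ : _ - c = (\int[P]_v F v - c * \int[P]_v G v) / \int[P]_v G v); last first.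
  by rewrite mulrBl -mulrA divff ?mulr1 // gt_eqF.
rewrite normrM (gtr0_norm (_ : 0 < (\int[P]_v G v)^-1)) ?invr_gt0 //.
have -> : (M - m) / (m * r) * t = (M - m) * B * t / (r * B) / m.
  by field; rewrite !gt_eqF.
apply: ler_wpM2r; first by rewrite invr_ge0 ltW.
apply: ler_pM => //; first by rewrite invr_ge0 ltW.
by rewrite lef_pV2 ?posrE ?mulr_gt0.
Qed.

End FiniteTV.
End LogRatios.
Arguments ln_ratio_tvnorm {d V R P P' t} tvE {F G m M r B}.

Section Kernels.
Context {d : measure_display} {V : measurableType d} {R : realType}.
Implicit Types (P Q : probability V R) (k : nat -> V -> V -> R).

Definition kernel_family k :=
  forall i, unit_measurable (fun p : V * V => k i p.1 p.2).

(* With V_1, ..., V_j i.i.d. P, forward P k j w = E[prod_(1<=i<=j) k_i(V_i, V_(i+1)) |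
   V_(j+1) = w] and backward P k m j v = E[prod_(j<i<=j+m) k_i(V_i, V_(i+1)) | V_(j+1) = v]. *)
Fixpoint forward P k j : V -> R :=
  if j is j'.+1 then fun w => \int[P]_u (forward P k j' u * k j'.+1 u w)
  else fun=> 1.

Fixpoint backward P k m j : V -> R :=
  if m is m'.+1 then fun v => \int[P]_w (k j.+1 v w * backward P k m' j.+1 w)
  else fun=> 1.

Lemma forwardS P k j w :
  forward P k j.+1 w = \int[P]_u (forward P k j u * k j.+1 u w).
Proof. by []. Qed.

Lemma unit_measurable_forward P k j :
  kernel_family k -> unit_measurable (forward P k j).
Proof.
move=> hk; elim: j => [|j IH] /=; first exact: unit_measurable_cst1.
apply: (unit_measurable_Rintegral1 P (fun p => forward P k j p.1 * k j.+1 p.1 p.2)).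
exact: unit_measurableM (unit_measurable_fst _ IH) (hk _).
Qed.

Lemma unit_measurable_backward P k m j :
  kernel_family k -> unit_measurable (backward P k m j).
Proof.
move=> hk; elim: m j => [|m IH] j /=; first exact: unit_measurable_cst1.
apply: (unit_measurable_Rintegral2 P (fun p => k j.+1 p.1 p.2 * backward P k m j.+1 p.2)).
exact: unit_measurableM (hk _) (unit_measurable_snd _ (IH _)).
Qed.

Lemma forward_backward_shift P1 P2 k k' m j :
  kernel_family k -> kernel_family k' -> k j.+1 = k' j.+1 ->
  \int[P1]_v (forward P1 k j v * backward P2 k' m.+1 j v) =
  \int[P2]_w (forward P1 k j.+1 w * backward P2 k' m j.+1 w).
Proof.
move=> hk hk' kk' /=; rewrite -kk'.
have hF := unit_measurable_forward P1 k j hk.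
have hB := unit_measurable_backward P2 k' m j.+1 hk'.
pose h p := forward P1 k j p.1 * k j.+1 p.1 p.2 * backward P2 k' m j.+1 p.2.
have hh : unit_measurable h.
  apply: unit_measurableM (unit_measurable_snd _ hB).
  exact: unit_measurableM (unit_measurable_fst _ hF) (hk _).
transitivity (\int[P1]_v \int[P2]_w h (v, w)).
  apply: eq_Rintegral => v _; rewrite -RintegralZl_bounded.
    by apply: eq_Rintegral => w _; rewrite /h mulrA.
  exact/unit_measurable_bounded/(unit_measurableM (unit_measurable_pair2 _ (hk _) v) hB).
rewrite (Rintegral_swap P1 P2 _ hh); apply: eq_Rintegral => w _.
rewrite -RintegralZr_bounded //.
exact/unit_measurable_bounded/(unit_measurableM hF (unit_measurable_pair1 _ (hk _) w)).
Qed.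

Lemma iint_forward P k n j (v : nat -> V) : kernel_family k -> (j <= n)%N ->
  iint P j (fun v => (\prod_(1 <= i < n.+1) k i (v i) (v i.+1))%:E) v =
  (forward P k j (v j.+1) * \prod_(j.+1 <= i < n.+1) k i (v i) (v i.+1))%:E.
Proof.
move=> hk; elim: j v => [|j IH] v jn /=; first by rewrite mul1r.
rewrite (eq_integral (fun w => ((forward P k j w * k j.+1 w (v j.+2)) *
    \prod_(j.+2 <= i < n.+1) k i (v i) (v i.+1))%:E)); last first.
  move=> w _; rewrite IH 1?ltnW // /upd eqxx big_ltn ?ltnS //.
  rewrite eqxx (gtn_eqF (ltnSn j.+1)) mulrA; congr (_ * _)%:E.
  by apply: eq_big_nat => i /andP[ji _]; rewrite !gtn_eqF // ltnS ltnW.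
have bFk : bounded_measurable (fun u => forward P k j u * k j.+1 u (v j.+2)).
  exact/unit_measurable_bounded/(unit_measurableM (unit_measurable_forward P k j hk)
    (unit_measurable_pair1 _ (hk _) _)).
rewrite integral_bounded_EFin ?RintegralZr_bounded //.
exact: bounded_measurableM bFk (bounded_measurable_cst _).
Qed.

Lemma iint_forward_full P k n : kernel_family k ->
  iint P n.+1 (fun v => (\prod_(1 <= i < n.+1) k i (v i) (v i.+1))%:E) (fun=> point) =
  (\int[P]_w forward P k n w)%:E.
Proof.
move=> hk /=; rewrite -integral_bounded_EFin;
  last exact/unit_measurable_bounded/unit_measurable_forward.
by apply: eq_integral => w _; rewrite iint_forward // /upd eqxx big_geq // mulr1.
Qed.

Lemma Rintegral_weight_bounds P (f h : V -> R) (c : R) :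
  unit_measurable f -> unit_measurable h -> (forall u, c <= h u) ->
  c * \int[P]_u f u <= \int[P]_u (f u * h u) <= \int[P]_u f u.
Proof.
move=> hf hh ch; have bf := unit_measurable_bounded hf.
have bfh := unit_measurable_bounded (unit_measurableM hf hh).
rewrite -RintegralZl_bounded //; apply/andP; split; apply: le_Rintegral_bounded => //.
- exact: bounded_measurableZ.
- by move=> u; rewrite mulrC ler_wpM2l ?(unit_measurable_ge0 hf).
- by move=> u; rewrite ler_piMr ?(unit_measurable_ge0 hf) ?(unit_measurable_le1 hh).
Qed.

Lemma Rintegral_ratio_contraction P (f g h : V -> R) (nu m M c : R) :
  unit_measurable f -> unit_measurable g -> unit_measurable h ->
  0 <= nu -> (forall u, nu <= h u) ->
  \int[P]_u f u = c * \int[P]_u g u -> m <= c <= M ->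
  (forall u, m * g u <= f u <= M * g u) ->
  (m + nu * (c - m)) * \int[P]_u (g u * h u) <= \int[P]_u (f u * h u) <=
  (M - nu * (M - c)) * \int[P]_u (g u * h u).
Proof.
(* Integrate m g (h - nu) <= f (h - nu) <= M g (h - nu), then use \int g h <= \int g. *)
move=> hf hg hh nu0 nuh fc /andP[mc cM] fg.
have [bf bg] := (unit_measurable_bounded hf, unit_measurable_bounded hg).
have bh := unit_measurable_bounded hh.
have hnu u : 0 <= h u - nu by rewrite subr_ge0.
have bhnu : bounded_measurable (fun u => h u - nu).
  exact: bounded_measurableB bh (bounded_measurable_cst nu).
have shift (phi : V -> R) : bounded_measurable phi ->
    \int[P]_u (phi u * (h u - nu)) = \int[P]_u (phi u * h u) - nu * \int[P]_u phi u.
  move=> bphi; under eq_Rintegral do rewrite mulrBr [phi _ * nu]mulrC.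
  by rewrite RintegralB_bounded ?RintegralZl_bounded //;
    [exact: bounded_measurableM | exact: bounded_measurableZ].
have bfhnu := bounded_measurableM bf bhnu; have bghnu := bounded_measurableM bg bhnu.
have bZghnu a := bounded_measurableZ a bghnu.
have lo : m * \int[P]_u (g u * (h u - nu)) <= \int[P]_u (f u * (h u - nu)).
  rewrite -RintegralZl_bounded //; apply: le_Rintegral_bounded => // u.
  by rewrite mulrA ler_wpM2r //; case/andP: (fg u).
have up : \int[P]_u (f u * (h u - nu)) <= M * \int[P]_u (g u * (h u - nu)).
  rewrite -RintegralZl_bounded //; apply: le_Rintegral_bounded => // u.
  by rewrite mulrA ler_wpM2r //; case/andP: (fg u).
rewrite !shift // fc in lo up.
have /andP[_ ghg] := Rintegral_weight_bounds P _ _ _ hg hh nuh.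
have cm : 0 <= nu * (c - m) by rewrite mulr_ge0 // subr_ge0.
have Mc : 0 <= nu * (M - c) by rewrite mulr_ge0 // subr_ge0.
have := ler_wpM2l cm ghg; have := ler_wpM2l Mc ghg.
by move=> *; apply/andP; split; nra.
Qed.

Section LowerBoundedKernels.
Context {k : nat -> V -> V -> R} {nu : nat -> R}.
Hypothesis hk : kernel_family k.
Hypothesis nu_gt0 : forall i, 0 < nu i.
Hypothesis nu_le_k : forall i u w, nu i <= k i u w.

Lemma kernel_lower_bound_le1 i : nu i <= 1.
Proof. exact: le_trans (nu_le_k i point point) (unit_measurable_le1 (hk i) (point, point)). Qed.

Lemma forward_harnack P j :
  exists2 S, 0 < S & forall v, nu j * S <= forward P k j v <= S.
Proof.
elim: j => [|j [S S0 hS]] /=.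
  by exists 1 => // v; rewrite mulr1 kernel_lower_bound_le1 lexx.
have hF := unit_measurable_forward P k j hk.
exists (\int[P]_u forward P k j u) => [|w].
  apply: (lt_le_trans (_ : 0 < nu j * S)); first by rewrite mulr_gt0.
  by apply: Rintegral_ge_cst (unit_measurable_bounded hF) _ => v; case/andP: (hS v).
exact: Rintegral_weight_bounds hF (unit_measurable_pair1 _ (hk _) w) _.
Qed.

Lemma backward_harnack P m j :
  exists2 T, 0 < T & forall v, nu j.+1 * T <= backward P k m j v <= T.
Proof.
elim: m j => [|m IH] j /=.
  by exists 1 => // v; rewrite mulr1 kernel_lower_bound_le1 lexx.
have [T T0 hT] := IH j.+1; have hB := unit_measurable_backward P k m j.+1 hk.
exists (\int[P]_w backward P k m j.+1 w) => [|v].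
  apply: (lt_le_trans (_ : 0 < nu j.+2 * T)); first by rewrite mulr_gt0.
  by apply: Rintegral_ge_cst (unit_measurable_bounded hB) _ => w; case/andP: (hT w).
under [X in _ <= X <= _]eq_Rintegral do rewrite mulrC.
exact: Rintegral_weight_bounds hB (unit_measurable_pair2 _ (hk _) v) _.
Qed.

Lemma forward_ratio_contraction P {k2 q} {m M : R} :
  kernel_family k2 -> (forall i, (q < i)%N -> k2 i = k i) ->
  (forall v, m * forward P k q v <= forward P k2 q v <= M * forward P k q v) ->
  forall j, (q <= j)%N -> exists m' M' : R, [/\ m <= m',
    M' - m' <= (M - m) * \prod_(q.+1 <= i < j.+1) (1 - nu i) &
    forall v, m' * forward P k j v <= forward P k2 j v <= M' * forward P k j v].
Proof.
move=> hk2 k2k hq j /subnK <-; elim: (j - q)%N => [|l [m' [M' [mm' hM'm' hv]]]].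
  by exists m, M; split; rewrite ?big_geq ?mulr1.
set j' := (l + q)%N; have qj' : (q < j'.+1)%N by rewrite ltnS leq_addl.
have hF := unit_measurable_forward P k j' hk.
have hF2 := unit_measurable_forward P k2 j' hk2.
have [bF bF2] := (unit_measurable_bounded hF, unit_measurable_bounded hF2).
have [S S0 hS] := forward_harnack P j'.
have IF0 : 0 < \int[P]_u forward P k j' u.
  apply: (lt_le_trans (_ : 0 < nu j' * S)); first by rewrite mulr_gt0.
  by apply: Rintegral_ge_cst bF _ => v; case/andP: (hS v).
set c := \int[P]_u forward P k2 j' u / \int[P]_u forward P k j' u.
have IF2 : \int[P]_u forward P k2 j' u = c * \int[P]_u forward P k j' u.
  by rewrite /c mulfVK ?gt_eqF.
have mcM : m' <= c <= M'.
  rewrite /c ler_pdivlMr // ler_pdivrMr // -!RintegralZl_bounded //.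
  by apply/andP; split; apply: le_Rintegral_bounded => //;
    try exact: bounded_measurableZ; move=> v; case/andP: (hv v).
have nu0 := ltW (nu_gt0 j'.+1).
exists (m' + nu j'.+1 * (c - m')), (M' - nu j'.+1 * (M' - c)); split.
- by case/andP: mcM => mc _; rewrite (le_trans mm') // lerDl mulr_ge0 // subr_ge0.
- rewrite addSn big_nat_recr //= mulrA [_ * (1 - _)]mulrC.
  have -> : M' - nu j'.+1 * (M' - c) - (m' + nu j'.+1 * (c - m')) =
    (1 - nu j'.+1) * (M' - m') by ring.
  by rewrite ler_wpM2l // subr_ge0 kernel_lower_bound_le1.
move=> w; rewrite addSn /= (k2k _ qj').
exact: Rintegral_ratio_contraction hF2 hF (unit_measurable_pair1 _ (hk _) w) nu0 _ IF2 mcM hv.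
Qed.

End LowerBoundedKernels.

End Kernels.

Section Coefficients.
Context {R : realType}.
Variables (nu : nat -> R) (q : nat).
Hypothesis nu_gt0 : forall i, 0 < nu i.
Hypothesis nu_le1 : forall i, nu i <= 1.

Definition tv_coef (l : nat) : R :=
  (nu q * nu (q + l)%N.-1 * nu (q + l)%N)^-1 * \prod_(q.+1 <= k < q + l) (1 - nu k).

Lemma tv_coef_ge0 l : 0 <= tv_coef l.
Proof.
rewrite mulr_ge0 ?invr_ge0 ?mulr_ge0 ?(ltW (nu_gt0 _)) //.
by apply: prodr_ge0 => i _; rewrite subr_ge0 nu_le1.
Qed.

Lemma inv_nu_le_tv_coef0 : (nu q)^-1 <= tv_coef 0.
Proof.
rewrite /tv_coef addn0 big_geq // mulr1 lef_pV2 ?posrE ?mulr_gt0 //.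
by rewrite ler_piMl ?(ltW (nu_gt0 _)) // mulr_ile1 ?nu_le1 ?(ltW (nu_gt0 _)).
Qed.

Lemma sum_tv_coef_gt0 N : 0 < \sum_(0 <= l < N.+1) tv_coef l.
Proof.
rewrite big_nat_recl //; apply: (lt_le_trans (_ : 0 < tv_coef 0)).
  by apply: lt_le_trans inv_nu_le_tv_coef0; rewrite invr_gt0.
by rewrite lerDl; apply: sumr_ge0 => l _; exact: tv_coef_ge0.
Qed.

End Coefficients.

Section Model.
Context {d : measure_display} {V : measurableType d} {R : realType} {X : finType}.
Variables (n : nat) (K : nat -> X -> V -> V -> R) (nu : nat -> R) (obs : nat -> X).
Hypothesis Kmeas : forall i x, measurable_fun setT (fun p : V * V => K i x p.1 p.2).
Hypothesis Kprob : forall i v w, \sum_(x : X) K i x v w = 1.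
Hypothesis nu_gt0 : forall i, 0 < nu i.
Hypothesis K_bounds : forall i x v w, nu i <= K i x v w <= 1.

Let nu_le_K i x v w : nu i <= K i x v w.
Proof. by case/andP: (K_bounds i x v w). Qed.

Lemma kernel_family_K (x : nat -> X) : kernel_family (fun i => K i (x i)).
Proof.
move=> i; split=> [|p]; first exact: Kmeas.
by case/andP: (K_bounds i (x i) p.1 p.2) => nuK ->; rewrite (le_trans (ltW (nu_gt0 i)) nuK).
Qed.

(* Summing out the observations before a turns their kernels into 1 (sum_obs_kernel). *)
Definition obs_kernel (a i : nat) : V -> V -> R :=
  if (i < a)%N then fun _ _ => 1 else K i (obs i).

Lemma kernel_family_obs_kernel a : kernel_family (obs_kernel a).
Proof.
move=> i; rewrite /obs_kernel; case: ifP => _; last exact: kernel_family_K.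
exact: unit_measurable_cst1.
Qed.

Lemma nu_le1 i : nu i <= 1.
Proof. by case/andP: (K_bounds i (obs i) point point) => /le_trans; apply. Qed.

Lemma nu_le_obs_kernel a i u w : nu i <= obs_kernel a i u w.
Proof. by rewrite /obs_kernel; case: ifP => _; [exact: nu_le1 | exact: nu_le_K]. Qed.

Lemma sum_obs_kernel a i u w :
  \sum_(x | (i < a)%N || (x == obs i)) K i x u w = obs_kernel a i u w.
Proof.
rewrite /obs_kernel; case: ltnP => _ /=; first by rewrite -(Kprob i u w).
by rewrite big_pred1_eq.
Qed.

Lemma jointP_forward P (x : nat -> X) :
  jointP P n K x = (\int[P]_w forward P (fun i => K i (x i)) n w)%:E.
Proof. exact/iint_forward_full/kernel_family_K. Qed.

Lemma ext_ord (z : {ffun 'I_n -> X}) (o : 'I_n) : ext obs z o.+1 = z o.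
Proof. by rewrite /ext valK. Qed.

(* Coordinate i of z is the observation x_(i+1) (see ext): below k it ranges over the
   values summed in margP, from k on it is pinned to y. *)
Definition free_below (a k : nat) (y z : {ffun 'I_n -> X}) :=
  [forall i : 'I_n, if (i < k)%N then (i.+1 < a)%N || (z i == obs i.+1) else z i == y i].

Lemma free_below_S a (o : 'I_n) y z :
  free_below a o.+1 y z =
  ((o.+1 < a)%N || (z o == obs o.+1)) &&
  free_below a o [ffun i => if i == o then z o else y i] z.
Proof.
have neq_val (i : 'I_n) : i != o -> (i : nat) != o.
  by apply: contraNneq => /val_inj ->.
rewrite /free_below; apply/forallP/andP => [H|[Ao /forallP H] i].
  split; first by have := H o; rewrite ltnSn.
  apply/forallP => i; rewrite ffunE; have := H i.
  case: (eqVneq i o) => [->|io]; first by rewrite ltnn eqxx.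
  by rewrite ltnS (leq_eqVlt i) (negbTE (neq_val _ io)).
have := H i; rewrite ffunE; case: (eqVneq i o) => [->|io]; first by rewrite ltnSn.
by rewrite ltnS (leq_eqVlt i) (negbTE (neq_val _ io)).
Qed.

Lemma sum_free_below_S a (o : 'I_n) y (G : {ffun 'I_n -> X} -> R) :
  \sum_(z | free_below a o.+1 y z) G z =
  \sum_(x | (o.+1 < a)%N || (x == obs o.+1))
     \sum_(z | free_below a o [ffun i => if i == o then x else y i] z) G z.
Proof.
rewrite (exchange_big_dep predT) //= big_mkcond; apply: eq_bigr => z _.
rewrite big_mkcond (bigD1 (z o)) //= big1 ?addr0 -?free_below_S //.
move=> x zx; case: andP => // -[_ /forallP/(_ o)].
by rewrite ltnn ffunE eqxx eq_sym (negbTE zx).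
Qed.

Lemma sum_forward_free_below P a k y w : (k <= n)%N ->
  \sum_(z | free_below a k y z) forward P (fun i => K i (ext obs z i)) k w =
  forward P (obs_kernel a) k w.
Proof.
elim: k y w => [|k IH] y w kn.
  rewrite (big_pred1 y) // => z; apply/forallP/eqP => [zy|->]; last by move=> i.
  by apply/ffunP => i; exact/eqP/zy.
pose o := Ordinal kn; rewrite -[k.+1]/(o.+1) sum_free_below_S forwardS.
have hF z := unit_measurable_forward P (fun i => K i (ext obs z i)) k (kernel_family_K _).
have hK x := unit_measurable_pair1 _ (kernel_family_K (fun=> x) k.+1) w.
transitivity (\sum_(x | (o.+1 < a)%N || (x == obs o.+1))
    \int[P]_u (forward P (obs_kernel a) k u * K k.+1 x u w)).
  apply: eq_bigr => x _; set y' := [ffun i => _].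
  under [RHS]eq_Rintegral do rewrite -(IH y' _ (ltnW kn)) mulr_suml.
  rewrite [RHS]Rintegral_sum_bounded.
    apply: eq_bigr => z /forallP/(_ o); rewrite ltnn ffunE eqxx forwardS => /eqP zo.
    by rewrite ext_ord zo.
  by move=> z _; apply/unit_measurable_bounded/unit_measurableM; [exact: hF | exact: hK].
rewrite -Rintegral_sum_bounded.
  by apply: eq_Rintegral => u _; rewrite -mulr_sumr sum_obs_kernel.
move=> x _; apply/unit_measurable_bounded/unit_measurableM; last exact: hK.
exact: unit_measurable_forward (kernel_family_obs_kernel a).
Qed.

Lemma margP_forward P a :
  margP P n K obs a = (\int[P]_w forward P (obs_kernel a) n w)%:E.
Proof.
rewrite /margP; under eq_bigr do rewrite jointP_forward.
rewrite sumEFin -Rintegral_sum_bounded; last first.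
  by move=> y _; exact/unit_measurable_bounded/unit_measurable_forward/kernel_family_K.
congr EFin; apply: eq_Rintegral => w _.
rewrite -(sum_forward_free_below P a n [ffun i : 'I_n => obs i.+1] w (leqnn n)).
apply: eq_bigl => z; apply: eq_forallb => i.
by rewrite ffunE ltn_ord implybE -ltnNge.
Qed.

Lemma obs_kernel_above a i : (a <= i)%N -> obs_kernel a i = obs_kernel 0 i.
Proof. by rewrite /obs_kernel ltnNge => ->. Qed.

Lemma forward_obs_kernel_lt P a j : (j < a)%N -> forward P (obs_kernel a) j = fun=> 1.
Proof.
elim: j => [//|j IH] ja; apply/funext => w; rewrite forwardS (IH (ltnW ja)) /obs_kernel ja.
by under eq_Rintegral do rewrite mulr1; rewrite Rintegral_prob_cst.
Qed.

Lemma forward_obs_kernel_self P a : (0 < a)%N ->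
  forward P (obs_kernel a) a = fun v => \int[P]_u K a (obs a) u v.
Proof.
case: a => [//|a] _; apply/funext => v; rewrite forwardS forward_obs_kernel_lt //.
by apply: eq_Rintegral => u _; rewrite mul1r /obs_kernel ltnn.
Qed.

Lemma forward_obs_kernel_ratio P {q j} : (0 < q)%N -> (q <= j)%N ->
  exists m M : R, [/\ nu q <= m, M - m <= \prod_(q.+1 <= i < j.+1) (1 - nu i) &
    forall v, m * forward P (obs_kernel q.+1) j v <= forward P (obs_kernel q) j v
              <= M * forward P (obs_kernel q.+1) j v].
Proof.
move=> q0 qj.
have init v : nu q * forward P (obs_kernel q.+1) q v <= forward P (obs_kernel q) q v
    <= 1 * forward P (obs_kernel q.+1) q v.
  rewrite (forward_obs_kernel_lt _ _ _ (ltnSn q)) forward_obs_kernel_self // !mulr1.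
  have hK := unit_measurable_pair1 _ (kernel_family_K (fun=> obs q) q) v.
  have bK := unit_measurable_bounded hK.
  apply/andP; split; first by apply: Rintegral_ge_cst bK _ => u; exact: nu_le_K.
  by apply: Rintegral_le_cst bK _ => u; exact: (unit_measurable_le1 hK).
have [|m [M [qm Mm hv]]] := forward_ratio_contraction (kernel_family_obs_kernel q.+1)
  nu_gt0 (nu_le_obs_kernel _) P (kernel_family_obs_kernel q) _ init _ qj.
  by move=> i qi; rewrite !obs_kernel_above // ltnW.
exists m, M; split=> //; apply: le_trans Mm _.
apply: ler_piMl; first by apply: prodr_ge0 => i _; rewrite subr_ge0 nu_le1.
by rewrite lerBlDr lerDl ltW.
Qed.

Section Hybrid.
Variables (P P' : probability V R) (q : nat).
Hypotheses (q_gt0 : (0 < q)%N) (q_le_n : (q <= n)%N).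

(* V_1, ..., V_k are drawn from Pf, V_(k+1) from Q and V_(k+2), ..., V_(n+1) from P'. *)
Definition hybrid (Pf Q : probability V R) (a k : nat) :=
  \int[Q]_v (forward Pf (obs_kernel a) k v * backward P' (obs_kernel 0) (n - k) k v).

Definition hybrid_ratio (Pf Q : probability V R) (k : nat) :=
  hybrid Pf Q q k / hybrid Pf Q q.+1 k.

Lemma hybrid_shift Pf a k : (a <= k.+1)%N -> (k < n)%N ->
  hybrid Pf Pf a k = hybrid Pf P' a k.+1.
Proof.
move=> ak kn; rewrite /hybrid -(subnSK kn).
apply: forward_backward_shift; try exact: kernel_family_obs_kernel.
exact: obs_kernel_above.
Qed.

Lemma hybrid_chain a k : (a <= k.+1)%N -> (k <= n)%N ->
  hybrid P' P' a k = hybrid P' P' a n.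
Proof.
move=> ak kn.
suff H l : (k + l <= n)%N -> hybrid P' P' a k = hybrid P' P' a (k + l).
  by rewrite -{1}(subnKC kn); apply: H; rewrite subnKC.
elim: l => [|l IH] kln; first by rewrite addn0.
rewrite addnS -hybrid_shift; last by rewrite -addnS.
  by apply: IH; rewrite (leq_trans _ kln) // leq_add2l.
by rewrite (leq_trans ak) // ltnS leq_addr.
Qed.

Lemma condP_hybrid_ratio Pf : condP Pf n K obs q = hybrid_ratio Pf Pf n.
Proof.
rewrite /condP !margP_forward /hybrid_ratio /hybrid subnn /=.
by congr (_ / _); apply: eq_Rintegral => v _; rewrite mulr1.
Qed.

Section FiniteDistance.
Variable t : R.
Hypothesis tvE : tvnorm P P' = t%:E.

Let t_ge0 : 0 <= t. Proof. by rewrite -lee_fin -tvE tvnorm_ge0. Qed.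

Lemma ln_hybrid_ratio_step l : (q + l <= n)%N ->
  `|ln (hybrid_ratio P P (q + l)) - ln (hybrid_ratio P P' (q + l))| <= tv_coef nu q l.+1 * t.
Proof.
move=> kn; set k := (q + l)%N; have qk : (q <= k)%N by rewrite leq_addr.
set Fa := forward P (obs_kernel q) k; set Fb := forward P (obs_kernel q.+1) k.
set G := backward P' (obs_kernel 0) (n - k) k.
have [m [M [qm Mm hv]]] := forward_obs_kernel_ratio P q_gt0 qk.
have [S S0 hS] := forward_harnack (kernel_family_obs_kernel q.+1) nu_gt0 (nu_le_obs_kernel _) P k.
have [T T0 hT] := backward_harnack (kernel_family_obs_kernel 0) nu_gt0 (nu_le_obs_kernel _) P' (n - k) k.
have hFa := unit_measurable_forward P _ k (kernel_family_obs_kernel q).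
have hFb := unit_measurable_forward P _ k (kernel_family_obs_kernel q.+1).
have hG := unit_measurable_backward P' _ (n - k) k (kernel_family_obs_kernel 0).
have G0 v : 0 <= G v := unit_measurable_ge0 hG v.
have m0 : 0 < m := lt_le_trans (nu_gt0 q) qm.
have hFG v : m * (Fb v * G v) <= Fa v * G v <= M * (Fb v * G v).
  by rewrite !mulrA !ler_wpM2r //; case/andP: (hv v).
have hGb v : nu k * nu k.+1 * (S * T) <= Fb v * G v <= S * T.
  have /andP[Sl Su] := hS v; have /andP[Tl Tu] := hT v.
  have [nk nk1] := (ltW (nu_gt0 k), ltW (nu_gt0 k.+1)).
  rewrite mulrACA; apply/andP; split; apply: ler_pM => //;
    by rewrite ?mulr_ge0 ?(ltW S0) ?(ltW T0) ?(unit_measurable_ge0 hFb).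
have bFG (F : V -> R) : unit_measurable F -> bounded_measurable (fun v => F v * G v).
  by move=> hF; exact/unit_measurable_bounded/unit_measurableM.
have r0 : 0 < nu k * nu k.+1 by rewrite mulr_gt0.
apply: le_trans (ln_ratio_tvnorm tvE (bFG _ hFa) (bFG _ hFb) m0 r0 _ hFG hGb) _.
  by rewrite mulr_gt0.
have Mm0 : 0 <= M - m.
  have /andP[mFb FbM] := hv point; have /andP[Sl _] := hS point.
  rewrite subr_ge0 -(ler_pM2r (_ : 0 < Fb point)) ?(le_trans mFb FbM) //.
  by apply: lt_le_trans Sl; rewrite mulr_gt0.
rewrite /tv_coef addnS /= -/k; apply: ler_wpM2r => //.
rewrite -mulrA mulrC; apply: ler_pM => //; first by rewrite invr_ge0 mulr_ge0 ?ltW.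
by rewrite lef_pV2 ?posrE ?mulr_gt0 // ler_pM2r.
Qed.

Lemma ln_hybrid_ratio_init :
  `|ln (hybrid_ratio P P' q) - ln (hybrid_ratio P' P' q)| <= t / nu q.
Proof.
set G := backward P' (obs_kernel 0) (n - q) q.
pose phi (Pf : probability V R) v := \int[Pf]_u K q (obs q) u v.
have hK := kernel_family_K (fun=> obs q) q.
have hKv v := unit_measurable_pair1 _ hK v.
have E Pf : hybrid_ratio Pf P' q = \int[P']_v (phi Pf v * G v) / \int[P']_v G v.
  rewrite /hybrid_ratio /hybrid (forward_obs_kernel_lt _ _ _ (ltnSn q)) forward_obs_kernel_self //.
  by congr (_ / _); apply: eq_Rintegral => v _; rewrite mul1r.
have hG := unit_measurable_backward P' _ (n - q) q (kernel_family_obs_kernel 0).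
have hphi Pf : unit_measurable (phi Pf) by exact: unit_measurable_Rintegral1 _ _ hK.
have phi_ge Pf v : nu q <= phi Pf v.
  by apply: Rintegral_ge_cst (unit_measurable_bounded (hKv v)) _ => u; exact: nu_le_K.
have [T T0 hT] := backward_harnack (kernel_family_obs_kernel 0) nu_gt0 (nu_le_obs_kernel _) P' (n - q) q.
rewrite !E; apply: ln_ratio_perturb; try exact: unit_measurable_bounded.
- exact: unit_measurable_ge0 hG.
- apply: (lt_le_trans (_ : 0 < nu q.+1 * T)); first by rewrite mulr_gt0.
  by apply: Rintegral_ge_cst (unit_measurable_bounded hG) _ => v; case/andP: (hT v).
- exact: nu_gt0.
- exact: phi_ge.
- exact: phi_ge.
move=> v; rewrite /phi -[t]mul1r.
apply: (Rintegral_dist_le_tvnorm tvE (proj1 (hKv v))) => u.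
by rewrite ger0_norm ?(unit_measurable_ge0 hK (u, v)) ?(unit_measurable_le1 hK (u, v)).
Qed.

Lemma ln_condP_dist :
  `|ln (condP P n K obs q) - ln (condP P' n K obs q)|
    <= (\sum_(0 <= l < n.+2 - q) tv_coef nu q l) * t.
Proof.
set N := (n - q)%N; have nE : n = (q + N)%N by rewrite subnKC.
have -> : (n.+2 - q = N.+2)%N by rewrite nE -!addnS addKn.
rewrite !condP_hybrid_ratio {1}nE.
rewrite [hybrid_ratio P' P' n](_ : _ = hybrid_ratio P' P' (q + 0)); last first.
  by rewrite /hybrid_ratio addn0 !(hybrid_chain _ q) ?leqnSn.
apply: le_trans (dist_telescope (fun l => ln (hybrid_ratio P P (q + l)))
  (fun l => ln (hybrid_ratio P P' (q + l))) _ N _) _.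
  move=> l lN; have ql : (q + l < n)%N by rewrite nE ltn_add2l.
  rewrite /hybrid_ratio addnS !hybrid_shift //; first by rewrite ltnS leq_addr.
  exact: leqW (leq_addr _ _).
rewrite [X in _ <= X * _]big_nat_recl // mulrDl [leRHS]addrC; apply: lerD.
  rewrite mulr_suml; apply: ler_sum_nat => l /= lN.
  by apply: ln_hybrid_ratio_step; rewrite -leq_subRL // -ltnS.
rewrite !addn0 [leRHS]mulrC; apply: le_trans ln_hybrid_ratio_init _.
by rewrite ler_wpM2l // (inv_nu_le_tv_coef0 nu q nu_gt0 nu_le1).
Qed.

End FiniteDistance.

End Hybrid.

End Model.

Arguments ln_condP_dist {d V R X n K nu obs} Kmeas Kprob nu_gt0 K_bounds
  {P P' q} q_gt0 q_le_n {t} tvE.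

Theorem lemma7 (d : measure_display) (V : measurableType d) (R : realType)
    (X : finType) (n : nat) (K : nat -> X -> V -> V -> R) (nu : nat -> R)
    (hn : (1 <= n)%N)
    (Kmeas : forall i x, measurable_fun setT (fun p : V * V => K i x p.1 p.2))
    (Kprob : forall i v w, \sum_(x : X) K i x v w = 1)
    (nu_pos : forall i, 0 < nu i)
    (H2 : forall i x v w, nu i <= K i x v w <= 1)
    (pi pi' : probability V R) (q : nat) (hq : (1 <= q <= n)%N)
    (obs : nat -> X) :
  (`| ln (condP pi n K obs q) - ln (condP pi' n K obs q) |%:E <=
   (2 * \sum_(0 <= l < n.+2 - q)
          ((nu q * nu (q + l)%N.-1 * nu (q + l)%N)^-1
           * \prod_(q.+1 <= k < q + l) (1 - nu k)))%:E
   * tvnorm pi pi')%E.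
Proof.
case/andP: hq => q_gt0 q_le_n.
have nu_le1 := nu_le1 K nu obs H2.
have sum_gt0 : 0 < \sum_(0 <= l < n.+2 - q) tv_coef nu q l.
  have -> : (n.+2 - q = (n - q).+2)%N by rewrite !subSn // leqW.
  exact: sum_tv_coef_gt0.
case E: tvnorm => [t| |]; last by have := tvnorm_ge0 pi pi'; rewrite E.
  rewrite -EFinM lee_fin.
  apply: le_trans (ln_condP_dist Kmeas Kprob nu_pos H2 q_gt0 q_le_n E) _.
  apply: ler_wpM2r; first by rewrite -lee_fin -E tvnorm_ge0.
  by apply: ler_peMl; [exact: ltW | rewrite ler1n].
by rewrite gt0_muley ?lte_fin ?mulr_gt0 // leey.
Qed.
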